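(* There exists a family $(L_n)_{n\ge2}$ of $\omega$-languages, $L_n$ over an alphabet with $n$ letters, such that for every $n\ge 2$, $L_n$ is recognized by a limit-deterministic Büchi automaton with $3n+2$ states, but $L_n$ is not recognized by any deterministic parity automaton with fewer than $n!$ states.
   Context: A limit-deterministic Büchi automaton (LDBA) is a nondeterministic Büchi automaton $(Q,q_0,\Sigma,\delta,\alpha)$ together with $Q_d\subseteq Q$ such that all accepting transitions are within $Q_d$, the transition relation is deterministic on $Q_d$, and $Q_d$ is closed under successors. A deterministic parity automaton has a deterministic transition function and a coloring of transitions by positive integers; a word is accepted iff the minimal color seen infinitely often on its run is even. *)

From mathcomp Require Import all_boot.
Set Implicit Arguments. Unset Strict Implicit. Unset Printing Implicit Defensive.

Definition oword (Sigma : Type) := nat -> Sigma.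

Definition inf_often (P : nat -> Prop) : Prop := forall N, exists i, N <= i /\ P i.

Record NBA (Q Sigma : finType) := mkNBA {
  nba_init  : Q;
  nba_delta : Q -> Sigma -> Q -> bool;
  nba_acc   : Q -> Sigma -> Q -> bool
}.

Definition nba_run (Q Sigma : finType) (A : NBA Q Sigma) (w : oword Sigma)
  (r : nat -> Q) : Prop :=
  r 0 = nba_init A /\ forall i, nba_delta A (r i) (w i) (r i.+1).

Definition nba_accepts (Q Sigma : finType) (A : NBA Q Sigma) (w : oword Sigma) : Prop :=
  exists r, nba_run A w r /\ inf_often (fun i => nba_acc A (r i) (w i) (r i.+1)).

Definition is_LDBA (Q Sigma : finType) (A : NBA Q Sigma) (Qd : {set Q}) : Prop :=
  (forall p a q, nba_acc A p a q -> nba_delta A p a q /\ p \in Qd /\ q \in Qd) /\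
  (forall p a q1 q2, p \in Qd -> nba_delta A p a q1 -> nba_delta A p a q2 -> q1 = q2) /\
  (forall p a q, p \in Qd -> nba_delta A p a q -> q \in Qd).

Record DPA (Q Sigma : finType) := mkDPA {
  dpa_init  : Q;
  dpa_trans : Q -> Sigma -> Q;
  dpa_col   : Q -> Sigma -> nat
}.

Definition dpa_wf (Q Sigma : finType) (A : DPA Q Sigma) : Prop :=
  forall q a, 0 < dpa_col A q a.

Fixpoint dpa_run (Q Sigma : finType) (A : DPA Q Sigma) (w : oword Sigma) (i : nat) : Q :=
  match i with
  | 0 => dpa_init A
  | i'.+1 => dpa_trans A (dpa_run A w i') (w i')
  end.

Definition dpa_color_at (Q Sigma : finType) (A : DPA Q Sigma) (w : oword Sigma) (i : nat) : nat :=
  dpa_col A (dpa_run A w i) (w i).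

Definition dpa_accepts (Q Sigma : finType) (A : DPA Q Sigma) (w : oword Sigma) : Prop :=
  exists c, ~~ odd c /\
    inf_often (fun i => dpa_color_at A w i = c) /\
    (forall c', inf_often (fun i => dpa_color_at A w i = c') -> c <= c').

Definition recognizes_nba (Q Sigma : finType) (A : NBA Q Sigma) (L : oword Sigma -> Prop) :=
  forall w, L w <-> nba_accepts A w.

Definition recognizes_dpa (Q Sigma : finType) (A : DPA Q Sigma) (L : oword Sigma -> Prop) :=
  forall w, L w <-> dpa_accepts A w.

From mathcomp Require Import all_boot zify boolp.
Set Implicit Arguments. Unset Strict Implicit. Unset Printing Implicit Defensive.

(** L_n consists of the words over n letters in which some letter occurs
   infinitely often but, from some point on, never twice in a row.  An LDBA
   guesses that letter and the point from which on it is isolated, and then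
   checks deterministically, remembering whether the last letter was the
   guessed one.

   For the lower bound, fix a DPA for L_n, a set A of letters and a reachable
   state q; we show that at least |A|! states are reachable from q by words over A.
   For x in A, call a cycle isolating if it reads x, never reads xx, and reads
   aa for every other a in A; its lasso is in L_n, so its least colour is even.
   An isolating cycle for x and one for y <> x through the same state combine
   into a cycle reading aa for every letter, whose lasso is not in L_n although
   its least colour is even; so the states on isolating cycles for distinct
   letters are distinct.  Finally, from a bottom class of the states reachable
   from q by words avoiding xx, every state reachable without x lies on an
   isolating cycle for x, and induction on A \ x gives (|A| - 1)! of them. *)

Section FinitePreorder.
Variables (T : finType) (R : T -> T -> Prop).
Hypotheses (R_refl : forall x, R x x) (R_trans : forall x y z, R x y -> R y z -> R x z).

Lemma preorder_maximal_above q : exists2 p, R q p & forall r, R p r -> R r p.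
Proof.
pose up p := [set r | `[< R p r >]].
have q_up : `[< R q q >] by apply/asboolP.
case: (@arg_minnP _ q (fun p => `[< R q p >]) (fun p => #|up p|) q_up) => p /asboolP qp p_min.
exists p => // r pr.
have up_r_sub : up r \subset up p.
  by apply/subsetP => z /[!inE] /asboolP rz; apply/asboolP; apply: R_trans rz.
have up_p_le : #|up p| <= #|up r|.
  by apply: p_min; apply/asboolP; exact: R_trans qp pr.
have /subset_cardP/(_ up_r_sub)/(_ p) : #|up r| = #|up p|.
  by apply/eqP; rewrite eqn_leq up_p_le subset_leq_card.
by rewrite !inE => up_eq; apply/asboolP; rewrite up_eq; apply/asboolP; exact: R_refl.
Qed.

End FinitePreorder.

Lemma cycle_position s p k : 0 < p -> s <= k -> exists m j, j < p /\ k = s + m * p + j.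
Proof.
move=> p_gt0 sk; exists ((k - s) %/ p), ((k - s) %% p).
by rewrite ltn_pmod // -addnA -divn_eq subnKC.
Qed.

Lemma inf_often_cycle {P : nat -> Prop} s p j :
  0 < p -> (forall m, P (s + m * p + j)) -> inf_often P.
Proof.
move=> p_gt0 hP N; exists (s + N * p + j); split => //.
by have := leq_pmulr N p_gt0; lia.
Qed.

Definition even_min (s : seq nat) :=
  exists2 c, c \in s & ~~ odd c /\ {in s, forall c', c <= c'}.

Lemma even_min_cat s t : even_min s -> even_min t -> even_min (s ++ t).
Proof.
move=> [c cs [c_even c_min]] [e et [e_even e_min]].
have [ce | ec] := leqP c e.
  exists c; rewrite ?mem_cat ?cs //; split => // c' /[!mem_cat] /orP[/c_min // | /e_min].
  exact: leq_trans.
exists e; rewrite ?mem_cat ?et ?orbT //; split => // c' /[!mem_cat] /orP[/c_min | /e_min //].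
by apply: leq_trans; apply: ltnW.
Qed.

Section PeriodicWords.
Variables (Sigma : eqType) (d : Sigma).

Definition uper (u v : seq Sigma) : oword Sigma := fun k =>
  if k < size u then nth d u k else nth d v ((k - size u) %% size v).

Lemma uper_cycle u v m j : j < size v -> uper u v (size u + m * size v + j) = nth d v j.
Proof.
move=> jv; rewrite /uper ifF; last by lia.
by rewrite -addnA addKn modnMDl modn_small.
Qed.

(* With default [x], the condition also forbids [s] to end with [x]. *)
Definition guarded (x : Sigma) (s : seq Sigma) :=
  forall j, j < size s -> nth x s j = x -> nth x s j.+1 != x.

Lemma guarded_notin x s : x \notin s -> guarded x s.
Proof. by move=> xs j js sj; move: xs; rewrite -sj mem_nth. Qed.

Lemma guarded_pair x a : a != x -> guarded x [:: x; a].
Proof. by move=> ax [|[|j]] //= _ /eqP; rewrite (negbTE ax). Qed.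

Lemma guarded_cat x s t : guarded x s -> guarded x t -> guarded x (s ++ t).
Proof.
move=> gs gt j; rewrite size_cat !nth_cat => jst.
case: (ltnP j (size s)) => [js | sj] sjx.
  have := gs j js sjx; case: (ltnP j.+1 (size s)) => // sj1.
  by rewrite (nth_default x sj1) eqxx.
rewrite ltnNge (leqW sj) subSn //=; apply: gt sjx; lia.
Qed.

Definition recurrent_isolated (w : oword Sigma) := exists i,
  inf_often (fun k => w k = i) /\ exists N, forall k, N <= k -> ~ (w k = i /\ w k.+1 = i).

Lemma uper_recurrent_isolated u v x : x \in v -> guarded x v -> recurrent_isolated (uper u v).
Proof.
move=> xv gv; have v_gt0 : 0 < size v by case: v xv {gv}.
exists x; split.
  apply: (inf_often_cycle (s := size u) (j := index x v) v_gt0) => m.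
  by rewrite uper_cycle ?index_mem // nth_index.
exists (size u) => k /(cycle_position v_gt0) [m [j [jv ->]]].
rewrite uper_cycle // -addnS => -[vj].
have := gv j jv; rewrite (set_nth_default d) // vj => /(_ erefl).
have [j1v | vj1] := ltnP j.+1 (size v); last by rewrite nth_default ?eqxx.
by rewrite uper_cycle // (set_nth_default d) // => /eqP.
Qed.

Lemma uper_not_recurrent_isolated u v : 0 < size v ->
  {in v, forall a, infix [:: a; a] v} -> ~ recurrent_isolated (uper u v).
Proof.
move=> v_gt0 v_sq [i [i_inf [N i_iso]]].
have [k [Nk]] := i_inf (maxn N (size u)).
have /(cycle_position v_gt0) [m [j [jv ->]]] : size u <= k by lia.
rewrite uper_cycle // => vj; have /v_sq/infixP [s [s' def_v]] : i \in v by rewrite -vj mem_nth.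
have sv : (size s).+1 < size v by rewrite def_v !size_cat /=; lia.
apply: (i_iso (size u + N * size v + size s)); first by have := leq_pmulr N v_gt0; lia.
rewrite -addnS !uper_cycle ?(ltnW sv) // def_v !nth_cat ltnn subnn /= ifF; last by lia.
by rewrite subSnn.
Qed.

End PeriodicWords.

Section DpaOnPeriodicWords.
Variables (Q Sigma : finType) (B : DPA Q Sigma).

Definition dpa_read (q : Q) (s : seq Sigma) : Q := foldl (dpa_trans B) q s.

Fixpoint dpa_colors (q : Q) (s : seq Sigma) : seq nat :=
  if s is a :: s' then dpa_col B q a :: dpa_colors (dpa_trans B q a) s' else [::].

Lemma dpa_read_cat q s t : dpa_read q (s ++ t) = dpa_read (dpa_read q s) t.
Proof. exact: foldl_cat. Qed.

Lemma dpa_read_rcons q s a : dpa_read q (rcons s a) = dpa_trans B (dpa_read q s) a.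
Proof. exact: foldl_rcons. Qed.

Lemma dpa_colors_cat q s t :
  dpa_colors q (s ++ t) = dpa_colors q s ++ dpa_colors (dpa_read q s) t.
Proof. by elim: s q => //= a s IHs q; rewrite IHs. Qed.

Lemma nth_dpa_colors d q s j : j < size s ->
  nth 0 (dpa_colors q s) j = dpa_col B (dpa_read q (take j s)) (nth d s j).
Proof. by elim: s q j => // a s IHs q [|j] //= js; rewrite IHs. Qed.

Lemma size_dpa_colors q s : size (dpa_colors q s) = size s.
Proof. by elim: s q => //= a s IHs q; rewrite IHs. Qed.

Section Lasso.
Variables (d : Sigma) (u v : seq Sigma) (p : Q).
Hypotheses (read_u : dpa_read (dpa_init B) u = p) (read_v : dpa_read p v = p).

Lemma dpa_run_uper_prefix k : k <= size u ->
  dpa_run B (uper d u v) k = dpa_read (dpa_init B) (take k u).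
Proof.
elim: k => [|k IHk] ku /=; first by rewrite take0.
by rewrite IHk 1?ltnW // (take_nth d ku) dpa_read_rcons /uper ku.
Qed.

Lemma dpa_run_uper m j : j <= size v ->
  dpa_run B (uper d u v) (size u + m * size v + j) = dpa_read p (take j v).
Proof.
elim: m j => [|m IHm] j; elim: j => [|j IHj] jv; rewrite ?take0;
  try by rewrite addnS /= IHj 1?ltnW // uper_cycle // (take_nth d jv) dpa_read_rcons.
  by rewrite !addn0 dpa_run_uper_prefix // take_size.
by rewrite addn0 mulSnr addnA IHm // take_size read_v.
Qed.

Lemma dpa_color_uper m j : j < size v ->
  dpa_color_at B (uper d u v) (size u + m * size v + j) = nth 0 (dpa_colors p v) j.
Proof.
by move=> jv; rewrite /dpa_color_at dpa_run_uper 1?ltnW // uper_cycle // (nth_dpa_colors d).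
Qed.

Lemma inf_often_dpa_color_uper c : 0 < size v ->
  inf_often (fun k => dpa_color_at B (uper d u v) k = c) <-> c \in dpa_colors p v.
Proof.
move=> v_gt0; split => [c_inf | /(nthP 0) [j]].
  have [k [uk <-]] := c_inf (size u).
  have [m [j [jv ->]]] := cycle_position v_gt0 uk.
  by rewrite dpa_color_uper // mem_nth // size_dpa_colors.
rewrite size_dpa_colors => jv cj.
by apply: (inf_often_cycle (s := size u) (j := j) v_gt0) => m; rewrite dpa_color_uper.
Qed.

Lemma dpa_accepts_uper : 0 < size v -> dpa_accepts B (uper d u v) <-> even_min (dpa_colors p v).
Proof.
move=> v_gt0; split.
  move=> [c [c_even [/(inf_often_dpa_color_uper _ v_gt0) cv c_min]]].
  exists c => //; split => // c' /(inf_often_dpa_color_uper _ v_gt0); exact: c_min.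
move=> [c cv [c_even c_min]]; exists c; split => //.
split => [|c' /(inf_often_dpa_color_uper _ v_gt0)]; last exact: c_min.
exact/(inf_often_dpa_color_uper _ v_gt0).
Qed.

End Lasso.

End DpaOnPeriodicWords.

Section LowerBound.
Variables (Q Sigma : finType) (B : DPA Q Sigma).
Hypothesis B_rec : recognizes_dpa B (@recurrent_isolated Sigma).

Local Notation read := (dpa_read B).

Definition dpa_reachable (q : Q) := exists u, read (dpa_init B) u = q.

Definition reach_within (A : {set Sigma}) q r := exists2 s, {subset s <= A} & read q s = r.

Definition guarded_reach (A : {set Sigma}) x q r :=
  exists s, [/\ {subset s <= A}, guarded x s & read q s = r].

Definition isolating_cycle (A : {set Sigma}) x v :=
  [/\ {subset v <= A}, guarded x v, x \in v & {in A, forall a, a != x -> infix [:: a; a] v}].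

Definition reach_set A q := [set r | `[< reach_within A q r >]].

Definition cycle_set A q x :=
  [set r | `[< reach_within A q r /\ exists2 v, isolating_cycle A x v & read r v = r >]].

Lemma isolating_cycle_accepting A q x v : dpa_reachable q -> isolating_cycle A x v ->
  read q v = q -> even_min (dpa_colors B q v).
Proof.
move=> [u read_u] [_ gv xv _] read_v; have v_gt0 : 0 < size v by case: v xv {gv read_v}.
apply/(dpa_accepts_uper x read_u read_v v_gt0)/B_rec.
exact: uper_recurrent_isolated xv gv.
Qed.

Lemma cycle_set_disjoint A q x y : dpa_reachable q -> x != y ->
  [disjoint cycle_set A q x & cycle_set A q y].
Proof.
move=> [u read_u] xy; apply/pred0P => r /=; apply/negP => /andP[].
rewrite !inE => /asboolP[[s _ read_s] [vx cx read_vx]] /asboolP[_ [vy cy read_vy]].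
have read_us : read (dpa_init B) (u ++ s) = r by rewrite dpa_read_cat read_u.
have r_reach : dpa_reachable r by exists (u ++ s).
have read_vxy : read r (vx ++ vy) = r by rewrite dpa_read_cat read_vx.
have vxy_gt0 : 0 < size (vx ++ vy).
  by case: cx => _ _ xvx _; rewrite size_cat; case: vx xvx {read_vx read_vxy}.
have := even_min_cat (isolating_cycle_accepting r_reach cx read_vx)
  (isolating_cycle_accepting r_reach cy read_vy).
rewrite -[X in _ ++ dpa_colors _ X _]read_vx -dpa_colors_cat.
move/(dpa_accepts_uper x read_us read_vxy vxy_gt0)/B_rec.
have [vxA _ _ vx_sq] := cx; have [vyA _ _ vy_sq] := cy.
have vxyA : {subset vx ++ vy <= A} by move=> a /[!mem_cat] /orP[/vxA | /vyA].
apply: uper_not_recurrent_isolated => // a /vxyA aA.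
have [ax_eq | ax] := eqVneq a x; last exact/infix_catr/vx_sq.
by subst a; apply/infix_catl/vy_sq; rewrite // eq_sym.
Qed.

Lemma guarded_reach_refl A x q : guarded_reach A x q q.
Proof. by exists [::]. Qed.

Lemma guarded_reach_trans A x q r z :
  guarded_reach A x q r -> guarded_reach A x r z -> guarded_reach A x q z.
Proof.
move=> [s [sA gs read_s]] [t [tA gt read_t]]; exists (s ++ t); split.
- by move=> a /[!mem_cat] /orP[/sA | /tA].
- exact: guarded_cat.
- by rewrite dpa_read_cat read_s.
Qed.

Section BottomClass.
Variables (A : {set Sigma}) (x : Sigma) (p : Q).
Hypothesis p_bottom : forall r, guarded_reach A x p r -> guarded_reach A x r p.

Lemma bottom_return r w : guarded_reach A x p r -> {subset w <= A} -> guarded x w ->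
  exists t, [/\ {subset t <= A}, guarded x t & read r (w ++ t) = r].
Proof.
move=> pr wA gw.
have [t [tA gt read_t]] : guarded_reach A x (read r w) r.
  apply/(guarded_reach_trans _ pr)/p_bottom/(guarded_reach_trans pr).
  by exists w.
by exists t; split; rewrite ?dpa_read_cat.
Qed.

Lemma bottom_cycle_through r (ws : seq (seq Sigma)) : guarded_reach A x p r ->
    (forall w, w \in ws -> {subset w <= A} /\ guarded x w) ->
  exists v, [/\ {subset v <= A}, guarded x v, read r v = r
             & {in ws, forall w : seq Sigma, infix w v}].
Proof.
move=> pr; elim: ws => [|w ws IHws] wsP; first by exists [::].
have [|v [vA gv read_v ws_v]] := IHws.
  by move=> w' w'ws; apply: wsP; rewrite inE w'ws orbT.
have [wA gw] := wsP w (mem_head _ _).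
have [t [tA gt read_wt]] := bottom_return pr wA gw.
exists ((w ++ t) ++ v); split.
- by move=> a /[!mem_cat] /orP[/orP[/wA | /tA] | /vA].
- by do 2?apply: guarded_cat.
- by rewrite dpa_read_cat read_wt.
- move=> w' /[!inE] /orP[/eqP -> | /ws_v w'v]; first exact/infix_catr/prefix_infix.
  exact: infix_catl.
Qed.

Lemma bottom_isolating_cycle r a0 : x \in A -> a0 \in A :\ x -> guarded_reach A x p r ->
  exists2 v, isolating_cycle A x v & read r v = r.
Proof.
move=> xA /setD1P[a0x a0A] pr.
pose ws := [:: x; a0] :: [seq [:: a; a] | a <- enum (A :\ x)].
have [|v [vA gv read_v ws_v]] := bottom_cycle_through (ws := ws) pr.
  move=> w /[!inE] /orP[/eqP -> | /mapP[a /[!mem_enum] /setD1P[ax aA] ->]].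
    by split; [move=> b /[!inE] /orP[/eqP -> | /eqP ->] | apply: guarded_pair].
  split; first by move=> b /[!inE] /orP[/eqP -> | /eqP ->].
  by apply/guarded_notin; rewrite !inE negb_or eq_sym ax.
exists v => //; split => //.
  by apply/(mem_infix (ws_v _ (mem_head _ _)))/mem_head.
move=> a aA ax; apply: ws_v; rewrite inE; apply/orP; right.
by apply/mapP; exists a; rewrite // mem_enum !inE ax.
Qed.

End BottomClass.

Lemma reach_set_refl A q : q \in reach_set A q.
Proof. by rewrite inE; apply/asboolP; exists [::]. Qed.

Lemma card_cycle_set k (A : {set Sigma}) q x :
    (forall (A' : {set Sigma}) q',
       #|A'| = k -> dpa_reachable q' -> k`! <= #|reach_set A' q'|) ->
  #|A| = k.+1 -> 0 < k -> x \in A -> dpa_reachable q -> k`! <= #|cycle_set A q x|.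
Proof.
move=> IHk A_card k_gt0 xA [u read_u].
have [p qp p_bottom] :=
  preorder_maximal_above (guarded_reach_refl A x) (@guarded_reach_trans A x) q.
have Ax_card : #|A :\ x| = k by move: A_card; rewrite (cardsD1 x A) xA add1n => -[].
have p_reach : dpa_reachable p.
  by case: qp => s [_ _ read_s]; exists (u ++ s); rewrite dpa_read_cat read_u.
have [a0 a0Ax] : exists a0, a0 \in A :\ x by apply/card_gt0P; rewrite Ax_card.
apply: leq_trans (IHk _ _ Ax_card p_reach) (subset_leq_card _).
apply/subsetP => r /[!inE] /asboolP [s sAx read_s]; apply/asboolP.
have pr : guarded_reach A x p r.
  exists s; split => //; first by move=> a /sAx /setD1P[].
  by apply: guarded_notin; apply/negP => /sAx /[!inE] /[!eqxx].
split; first by have [t [tA _ read_t]] := guarded_reach_trans qp pr; exists t.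
exact: (bottom_isolating_cycle p_bottom xA a0Ax pr).
Qed.

Lemma card_reach_set k (A : {set Sigma}) q :
  #|A| = k -> dpa_reachable q -> k`! <= #|reach_set A q|.
Proof.
elim: k A q => [|k IHk] A q A_card q_reach.
  by rewrite card_gt0; apply/set0Pn; exists q; apply: reach_set_refl.
have [k0 | k_gt0] := posnP k.
  by rewrite k0 card_gt0; apply/set0Pn; exists q; apply: reach_set_refl.
have cycle_sub : \bigcup_x cycle_set A q x \subset reach_set A q.
  apply/bigcupsP => x _; apply/subsetP => r /[!inE] /asboolP[qr _].
  exact/asboolP.
apply: leq_trans (subset_leq_card cycle_sub).
rewrite -sum1_card partition_disjoint_bigcup; last first.
  by move=> x y; apply: cycle_set_disjoint.
under eq_bigr do rewrite sum1_card.
rewrite factS -A_card -sum_nat_const.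
apply: (@leq_trans (\sum_(x in A) #|cycle_set A q x|)).
  by apply: leq_sum => x xA; apply: card_cycle_set.
by rewrite big_mkcond leq_sum // => x _; case: ifP.
Qed.

Theorem dpa_recurrent_isolated_card : #|Sigma|`! <= #|Q|.
Proof.
have init_reach : dpa_reachable (dpa_init B) by exists [::].
exact: leq_trans (card_reach_set (A := setT) (cardsT _) init_reach) (max_card _).
Qed.

End LowerBound.

Section Ldba.
Variable n : nat.

(* State [0] waits nondeterministically; [ldba_state i b] has guessed the letter [i]
   and records in [b] whether the last letter read was [i].  The states above [2n]
   are unused. *)
Definition ldba_state (i : 'I_n) (b : bool) : nat := i.+1 + b * n.

Lemma ldba_state_lt i b : ldba_state i b < 3 * n + 2.
Proof. by have := ltn_ord i; rewrite /ldba_state; case: b; lia. Qed.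

Lemma ldba_state_inj i j b c : ldba_state i b = ldba_state j c -> i = j /\ b = c.
Proof.
have := ltn_ord i; have := ltn_ord j; rewrite /ldba_state.
by case: b; case: c => /= *; split; first [done | exfalso; lia | apply: ord_inj; lia].
Qed.

Definition ldba_delta (p : nat) (a : 'I_n) (q : nat) : bool :=
  (p == 0) && ((q == 0) || [exists i, q == ldba_state i (a == i)])
  || [exists i, exists b,
        [&& p == ldba_state i b, ~~ (b && (a == i)) & q == ldba_state i (a == i)]].

Definition ldba_acc (p : nat) (a : 'I_n) (q : nat) : bool :=
  ldba_delta p a q && (p == ldba_state a false).

Lemma ldba_delta_state i b a q :
  ldba_delta (ldba_state i b) a q = ~~ (b && (a == i)) && (q == ldba_state i (a == i)).
Proof.
apply/idP/idP => [|ok]; last first.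
  by apply/orP; right; apply/existsP; exists i; apply/existsP; exists b; rewrite eqxx.
case/orP => [/andP[/eqP //] | /existsP[j /existsP[c /and3P[/eqP e ok /eqP ->]]]].
by case: (ldba_state_inj e) ok => -> -> ->; rewrite eqxx.
Qed.

Lemma ldba_delta_gt0 p a q : 0 < p -> ldba_delta p a q ->
  exists i b, [/\ p = ldba_state i b, ~~ (b && (a == i)) & q = ldba_state i (a == i)].
Proof.
rewrite /ldba_delta lt0n => /negbTE -> /existsP[i /existsP[b /and3P[/eqP -> ok /eqP ->]]].
by exists i, b.
Qed.

Definition ldba : NBA 'I_(3 * n + 2) 'I_n :=
  mkNBA (Ordinal (ltn_addl (3 * n) (ltn0Sn 1)))
    (fun p a q => ldba_delta p a q) (fun p a q => ldba_acc p a q).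

Definition ldba_Qd : {set 'I_(3 * n + 2)} := [set p : 'I_(3 * n + 2) | 0 < p].

Lemma ldba_is_LDBA : is_LDBA ldba ldba_Qd.
Proof.
split; [|split].
- move=> p a q /andP[pq /eqP p_a]; split => //; rewrite !inE p_a; split => //.
  by move: pq; rewrite /= p_a ldba_delta_state => /andP[_ /eqP ->].
- move=> p a q1 q2 /[!inE] p_gt0 /(ldba_delta_gt0 p_gt0) [i [b [pE _ q1E]]].
  by rewrite /= pE ldba_delta_state => /andP[_ /eqP q2E]; apply: ord_inj; rewrite q1E q2E.
- by move=> p a q /[!inE] /ldba_delta_gt0 /[apply] -[i [b [_ _ ->]]].
Qed.

Lemma ldba_accepts_recurrent_isolated w : recurrent_isolated w -> nba_accepts ldba w.
Proof.
move=> [i [i_inf [N i_iso]]].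
pose f k := if k <= N then 0 else ldba_state i (w k.-1 == i).
have f_lt k : f k < 3 * n + 2.
  by rewrite /f; case: ifP => _; [rewrite addn2 | apply: ldba_state_lt].
have f_step k : ldba_delta (f k) (w k) (f k.+1).
  rewrite /f; case: (ltngtP k N) => [kN | Nk | ->].
  - by rewrite /ldba_delta eqxx.
  - rewrite /= ldba_delta_state eqxx andbT.
    apply/negP => /andP[/eqP wk1 /eqP wk]; apply: (i_iso k.-1); first lia.
    by rewrite prednK //; lia.
  - by rewrite /ldba_delta eqxx; apply/orP; left; apply/orP; right; apply/existsP; exists i.
exists (fun k => Ordinal (f_lt k)); split.
  by split => [|k]; [apply: val_inj | apply: f_step].
move=> M; have [k [Mk wk]] := i_inf (maxn M N).+1; exists k; split; first lia.
apply/andP; split; first exact: f_step.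
rewrite /= /f ifF; last lia.
have -> : (w k.-1 == i) = false.
  apply/eqP => wk1; apply: (i_iso k.-1); first lia.
  by rewrite prednK //; lia.
by rewrite wk.
Qed.

Lemma recurrent_isolated_of_ldba_accepts w : nba_accepts ldba w -> recurrent_isolated w.
Proof.
move=> [r [[_ r_step] r_acc]].
have [k0 [_ /andP[_ /eqP acc0]]] := r_acc 0.
set i := w k0 in acc0.
have r_state m : exists b, r (k0 + m) = ldba_state i b :> nat.
  elim: m => [|m [b rb]]; first by exists false; rewrite addn0.
  have := r_step (k0 + m); rewrite /= rb ldba_delta_state (addnS k0 m).
  by case/andP => _ /eqP ->; eexists.
exists i; split.
  move=> M; have [k [Mk /andP[_ /eqP acck]]] := r_acc (maxn M k0).
  exists k; split; first lia.
  have [b] := r_state (k - k0); rewrite subnKC; last lia.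
  by rewrite acck => /ldba_state_inj[].
exists k0 => k k0k [wk wk1].
have [b] := r_state (k - k0); rewrite subnKC // => rk.
have := r_step k; rewrite /= rk ldba_delta_state wk eqxx andbT => /andP[_ /eqP rk1].
by have := r_step k.+1; rewrite /= rk1 ldba_delta_state wk1 eqxx.
Qed.

Lemma ldba_recognizes : recognizes_nba ldba (@recurrent_isolated _).
Proof.
move=> w; split; first exact: ldba_accepts_recurrent_isolated.
exact: recurrent_isolated_of_ldba_accepts.
Qed.

End Ldba.

Theorem mainTheorem5 :
  exists L : forall n : nat, oword 'I_n -> Prop,
    forall n : nat, 2 <= n ->
      (exists (A : NBA 'I_(3 * n + 2) 'I_n) (Qd : {set 'I_(3 * n + 2)}),
          is_LDBA A Qd /\ recognizes_nba A (L n)) /\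
      (forall (Q : finType) (B : DPA Q 'I_n),
          #|Q| < n`! -> dpa_wf B -> ~ recognizes_dpa B (L n)).
Proof.
(* The bounds hold for every [n] and without positivity of the colours. *)
exists (fun n => @recurrent_isolated 'I_n) => n _; split.
  by exists (ldba n), (ldba_Qd n); split; [apply: ldba_is_LDBA | apply: ldba_recognizes].
move=> Q B Q_small _ B_rec.
by have := dpa_recurrent_isolated_card B_rec; rewrite card_ord leqNgt Q_small.
Qed.
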